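(* For every integer $N\ge 0$, let $T_{2\times 3}(9,N)$ be the number of tilings of a $9\times n$ rectangle, $n=2N/3$, by $N$ tiles of size $2\times 3$ (and $0$ if $2N/3\notin\mathbb{Z}$). Then, as formal power series, \[ \sum_{N\ge 0} T_{2\times 3}(9,N)\,z^N=\frac{1-z^3}{1-2z^3+z^6-4z^9+2z^{12}}. \]
   Context: A tiling of an $m\times n$ rectangle (width $m$, length $n$, made of $mn$ unit squares) by $a\times b$ tiles is a partition of the rectangle into non-overlapping axis-parallel $a\times b$ rectangles with integer corner coordinates, each placed in either of its two orientations. Tilings related by reflections or rotations of the rectangle are counted as distinct. The empty tiling counts once for $N=0$. *)

From mathcomp Require Import all_boot all_order all_algebra.
Set Implicit Arguments. Unset Strict Implicit. Unset Printing Implicit Defensive.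
Import GRing.Theory Num.Theory.

(* A placed tile in an m x n rectangle: (x, y, w, h) = lower-left corner (x,y)
   and dimensions w (along the width m) and h (along the length n). *)
Definition tile (m n : nat) : finType :=
  ('I_m.+1 * 'I_n.+1 * 'I_m.+1 * 'I_n.+1)%type.

Definition tx m n (t : tile m n) : nat := t.1.1.1.
Definition ty m n (t : tile m n) : nat := t.1.1.2.
Definition tw m n (t : tile m n) : nat := t.1.2.
Definition th m n (t : tile m n) : nat := t.2.

Definition good_tile (m n a b : nat) (t : tile m n) : bool :=
  [&& ((tw t == a) && (th t == b)) || ((tw t == b) && (th t == a)),
      tx t + tw t <= m & ty t + th t <= n].

Definition covers m n (t : tile m n) (i j : nat) : bool :=
  [&& tx t <= i < tx t + tw t & ty t <= j < ty t + th t].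

Definition is_tiling (m n a b : nat) (S : {set tile m n}) : bool :=
  [forall t in S, good_tile a b t] &&
  [forall i : 'I_m, forall j : 'I_n, #|[set t in S | covers t i j]| == 1].

Definition ntilings (m n a b N : nat) : nat :=
  #|[set S : {set tile m n} | is_tiling a b S && (#|S| == N)]|.

Definition T23_9 (N : nat) : nat :=
  if 3 %| 2 * N then ntilings 9 (2 * N %/ 3) 2 3 N else 0.

From mathcomp Require Import all_boot all_order all_algebra.
From mathcomp Require Import zify ring.
Import GRing.Theory.

(* Tilings are counted for the staircase regions in which row [i] of the
   board is filled up to column [k - t_i], for a profile [t] and a frontier
   [k].  If no row reaches the frontier, the region is that of [t - 1] at
   frontier [k - 1]; otherwise the highest row [x] reaching it ends in a cell
   that must be the upper right corner of its tile, and removing that tile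
   leaves the region of another profile.  From the flat profile only 67
   profiles are reachable.  Each comes with the numerator [c_t] of its
   generating function [c_t(w) / Q9(w)], [w] marking [k] and
   [Q9(w) = 1 - 2w^2 + w^4 - 4w^6 + 2w^8], and the two recurrences are checked
   on these series by computation.  The flat profile has [c = 1 - w^2]; as a
   9 x n rectangle holds [N = 3n/2] tiles, substituting [w^2 = z^3] gives
   [(1 - z^3) / Q(z)]. *)

Set Implicit Arguments. Unset Strict Implicit. Unset Printing Implicit Defensive.

Lemma sumn_le_mul (t : seq nat) k : (forall i, nth 0 t i <= k) -> sumn t <= size t * k.
Proof.
elim: t => [|v t IH] //= t_le; rewrite mulSn leq_add ?(t_le 0) //.
by apply: IH => i; apply: (t_le i.+1).
Qed.

Lemma sumn_lt_mul (t : seq nat) k x : x < size t -> nth 0 t x < k ->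
  (forall i, nth 0 t i <= k) -> sumn t < size t * k.
Proof.
elim: t x => [|v t IH] [|x] //= xt tx t_le; rewrite mulSn.
  by rewrite -addSn leq_add // sumn_le_mul // => i; apply: (t_le i.+1).
by rewrite -addnS leq_add ?(t_le 0) // (IH x) // => i; apply: (t_le i.+1).
Qed.

Section StaircaseTilings.

Variables (a b m n : nat).
Hypotheses (a_gt0 : 0 < a) (b_gt0 : 0 < b) (a_neq_b : a != b).
Implicit Types (t : seq nat) (S : {set tile m n}) (u : tile m n).

Definition orient_w (o : bool) := if o then a else b.
Definition orient_h (o : bool) := if o then b else a.

Lemma orient_w_gt0 o : 0 < orient_w o. Proof. by case: o. Qed.
Lemma orient_h_gt0 o : 0 < orient_h o. Proof. by case: o. Qed.

Definition in_region (t : seq nat) (k i j : nat) : bool := j + nth 0 t i < k.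

Definition ncover (S : {set tile m n}) (i j : nat) : nat :=
  #|[set u in S | covers u i j]|.

Definition tiles_region (t : seq nat) (k : nat) (S : {set tile m n}) : bool :=
  [forall u in S, good_tile a b u] &&
  [forall i : 'I_m, forall j : 'I_n, ncover S i j == in_region t k i j].

Definition nregion (t : seq nat) (k N : nat) : nat :=
  #|[set S : {set tile m n} | tiles_region t k S && (#|S| == N)]|.

(* The tile of orientation [o] with upper right cell [(x, k - 1)] covers rows
   [x + 1 - w, ..., x] and columns [k - h, ..., k - 1]. *)
Definition fits (t : seq nat) (x : nat) (o : bool) : bool :=
  (orient_w o <= x.+1) &&
  all (fun i => nth 0 t i == 0) (iota (x.+1 - orient_w o) (orient_w o)).

Definition place (t : seq nat) (x : nat) (o : bool) : seq nat :=
  mkseq (fun i => if x.+1 - orient_w o <= i <= x then orient_h o else nth 0 t i)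
        (size t).

Definition corner_tile (x k : nat) (o : bool) : tile m n :=
  (inord (x.+1 - orient_w o), inord (k - orient_h o),
   inord (orient_w o), inord (orient_h o)).

Lemma ncoverE S i j : ncover S i j = \sum_(u in S) covers u i j.
Proof.
rewrite /ncover -sum1_card [LHS]big_mkcond [RHS]big_mkcond.
by apply: eq_bigr => u _; rewrite inE; case: (u \in S); case: covers.
Qed.

Lemma ncoverU1 S u i j :
  u \notin S -> ncover (u |: S) i j = covers u i j + ncover S i j.
Proof. by move=> uS; rewrite !ncoverE big_setU1. Qed.

Lemma ncoverD1 S u i j :
  u \in S -> ncover S i j = covers u i j + ncover (S :\ u) i j.
Proof. by move=> uS; rewrite !ncoverE (big_setD1 _ uS). Qed.

Lemma good_tile_orient u : good_tile a b u ->
  exists o, [/\ tw u = orient_w o, th u = orient_h o,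
                tx u + tw u <= m & ty u + th u <= n].
Proof.
case/and3P=> /orP[] /andP[/eqP-> /eqP->] xm yn.
  by exists true.
by exists false.
Qed.

Lemma good_tile_covers u i j : good_tile a b u -> covers u i j -> i < m /\ j < n.
Proof. by case/good_tile_orient=> o [_ _ xm yn]; rewrite /covers; lia. Qed.

Lemma tiles_region_good t k S u : tiles_region t k S -> u \in S -> good_tile a b u.
Proof. by case/andP=> /forall_inP good _; apply: good. Qed.

Lemma tiles_region_ncover t k S i j : tiles_region t k S -> i < m -> j < n ->
  ncover S i j = in_region t k i j.
Proof.
by case/andP=> _ /forallP cov im jn; have /forallP/(_ (Ordinal jn))/eqP := cov (Ordinal im).
Qed.

Lemma tiles_region_covered t k S u i j :
  tiles_region t k S -> u \in S -> covers u i j -> in_region t k i j.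
Proof.
move=> tS uS cov; have [im jn] := good_tile_covers (tiles_region_good tS uS) cov.
rewrite -[in_region _ _ _ _]lt0b -(tiles_region_ncover tS im jn).
by apply/card_gt0P; exists u; rewrite inE uS.
Qed.

Lemma tiles_region_cover_uniq t k S u v i j : tiles_region t k S ->
  u \in S -> v \in S -> covers u i j -> covers v i j -> u = v.
Proof.
move=> tS uS vS cu cv; apply/eqP/contraT => uv.
have [im jn] := good_tile_covers (tiles_region_good tS uS) cu.
have : 1 < ncover S i j.
  apply: leq_trans (_ : 1 < #|[set u; v]|) _; first by rewrite cards2 uv.
  apply/subset_leq_card/subsetP => w; rewrite !inE.
  by case/orP=> /eqP ->; rewrite ?uS ?vS ?cu ?cv.
by rewrite (tiles_region_ncover tS im jn); case: in_region.
Qed.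

Lemma corner_cover t k S u x :
  tiles_region t k S -> u \in S -> covers u x k.-1 -> 0 < k ->
  (forall i, x < i < m -> 0 < nth 0 t i) ->
  exists o, [/\ fits t x o, orient_h o <= k & u = corner_tile x k o].
Proof.
move=> tS uS cov k_gt0 above.
(* The upper right cell of [u] lies in the region: this forces it into the
   frontier column and, since the rows above [x] end before it, into row [x]. *)
have [o [w h xm yn]] := good_tile_orient (tiles_region_good tS uS).
have w_gt0 := orient_w_gt0 o; have h_gt0 := orient_h_gt0 o.
have in_u i j : tx u <= i < tx u + tw u -> ty u <= j < ty u + th u -> in_region t k i j.
  by move=> ri rj; apply: (tiles_region_covered tS uS); rewrite /covers ri rj.
have top : in_region t k (tx u + tw u).-1 (ty u + th u).-1 by apply: in_u; lia.
move: cov; rewrite /covers => /andP[/andP[x1 x2] /andP[y1 y2]].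
have top_col : ty u + th u = k by move: top; rewrite /in_region; lia.
have top_row : (tx u + tw u).-1 = x.
  have := above (tx u + tw u).-1; move: top; rewrite /in_region; lia.
exists o; split.
- rewrite /fits -w; apply/andP; split; first lia.
  apply/allP => i; rewrite mem_iota => ri; apply/eqP.
  have := in_u i k.-1 ltac:(lia) ltac:(lia); rewrite /in_region; lia.
- lia.
move: w h xm yn top_col top_row {uS in_u top x1 x2 y1 y2}.
case: u => [[[ux uy] uw] uh]; rewrite /tx /ty /tw /th /= => w h xm yn top_col top_row.
by congr (_, _, _, _); apply: val_inj; rewrite /= inordK; lia.
Qed.

Section Corner.

Variables (x k : nat) (o : bool).
Hypotheses (x_lt_m : x < m) (w_le_x : orient_w o <= x.+1)
           (h_le_k : orient_h o <= k) (k_le_n : k <= n).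

Lemma corner_tileE :
  [/\ tx (corner_tile x k o) = x.+1 - orient_w o,
      ty (corner_tile x k o) = k - orient_h o,
      tw (corner_tile x k o) = orient_w o & th (corner_tile x k o) = orient_h o].
Proof. by rewrite /tx /ty /tw /th /corner_tile /= !inordK //; lia. Qed.

Lemma covers_corner_tile i j :
  covers (corner_tile x k o) i j = (x.+1 - orient_w o <= i <= x) && (k - orient_h o <= j < k).
Proof. by rewrite /covers; case: corner_tileE => -> -> -> ->; rewrite !subnK. Qed.

Lemma good_corner_tile : good_tile a b (corner_tile x k o).
Proof.
rewrite /good_tile; case: corner_tileE => -> -> -> ->; rewrite !subnK //.
by case: (o) w_le_x h_le_k => /= w h; rewrite !eqxx ?orbT /=; lia.
Qed.

Lemma corner_tile_covers_corner : covers (corner_tile x k o) x k.-1.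
Proof.
have := orient_w_gt0 o; have := orient_h_gt0 o.
rewrite covers_corner_tile; lia.
Qed.

End Corner.

Lemma fits_w t x o : fits t x o -> orient_w o <= x.+1.
Proof. by case/andP. Qed.

Lemma nth_place t x o i : i < size t ->
  nth 0 (place t x o) i = if x.+1 - orient_w o <= i <= x then orient_h o else nth 0 t i.
Proof. by move=> it; rewrite nth_mkseq. Qed.

Lemma place_le t x o k : orient_h o <= k -> (forall i, nth 0 t i <= k) ->
  forall i, nth 0 (place t x o) i <= k.
Proof.
move=> h_le t_le i; case: (ltnP i (size t)) => [it | ti].
  by rewrite nth_place //; case: ifP.
by rewrite nth_default // size_mkseq.
Qed.

Section Placement.

Variables (t : seq nat) (x k : nat) (o : bool).
Hypotheses (size_t : size t = m) (x_lt_m : x < m) (fit : fits t x o)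
           (h_le_k : orient_h o <= k) (k_le_n : k <= n).

Let w_le_x := fits_w fit.

Lemma in_region_place i j : i < m ->
  in_region t k i j = in_region (place t x o) k i j + covers (corner_tile x k o) i j :> nat.
Proof.
move=> im; rewrite covers_corner_tile // /in_region nth_place ?size_t //.
case: ifP => [ri | _]; last by rewrite addn0.
have /eqP -> : nth 0 t i == 0.
  by move/andP: fit => [_ /allP]; apply; rewrite mem_iota; lia.
rewrite addn0 /=; case: (ltnP j k) => jk; case: (leqP (k - orient_h o) j) => hj /=; lia.
Qed.

Lemma corner_tile_notin S : tiles_region (place t x o) k S -> corner_tile x k o \notin S.
Proof.
move=> tS; apply/negP => cS.
have := tiles_region_covered tS cS (corner_tile_covers_corner x_lt_m w_le_x h_le_k k_le_n).
have := orient_h_gt0 o; have w_gt0 := orient_w_gt0 o.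
rewrite /in_region nth_place ?size_t // ifT; lia.
Qed.

Lemma tiles_region_setU1 S :
  tiles_region (place t x o) k S -> tiles_region t k (corner_tile x k o |: S).
Proof.
move=> tS; apply/andP; split.
  apply/forall_inP => u; rewrite in_setU1 => /predU1P[-> | uS].
    exact: good_corner_tile.
  exact: tiles_region_good tS uS.
apply/forallP => i; apply/forallP => j; apply/eqP.
rewrite ncoverU1 ?corner_tile_notin // (tiles_region_ncover tS) //.
by rewrite (in_region_place _ (ltn_ord i)) addnC.
Qed.

Lemma tiles_region_setD1 S : tiles_region t k S -> corner_tile x k o \in S ->
  tiles_region (place t x o) k (S :\ corner_tile x k o).
Proof.
move=> tS cS; apply/andP; split.
  apply/forall_inP => u; rewrite in_setD1 => /andP[_ uS].
  exact: tiles_region_good tS uS.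
apply/forallP => i; apply/forallP => j; apply/eqP.
have := tiles_region_ncover tS (ltn_ord i) (ltn_ord j).
by rewrite (ncoverD1 _ _ cS) (in_region_place _ (ltn_ord i)) addnC; lia.
Qed.

Lemma card_tilings_with_corner N :
  #|[set S | [&& tiles_region t k S, #|S| == N.+1 & corner_tile x k o \in S]]| =
  nregion (place t x o) k N.
Proof.
pose D := [set S | tiles_region (place t x o) k S && (#|S| == N)].
have inj : {in D &, injective (fun S => corner_tile x k o |: S)}.
  move=> S1 S2; rewrite !inE => /andP[t1 _] /andP[t2 _] eq12.
  by rewrite -(setU1K (corner_tile_notin t1)) eq12 setU1K ?corner_tile_notin.
rewrite /nregion -/D -(card_in_imset inj); apply: eq_card => S; rewrite inE.
apply/idP/imsetP => [/and3P[tS cardS cS] | [S' S'D ->]].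
  exists (S :\ corner_tile x k o); last by rewrite setD1K.
  by rewrite inE tiles_region_setD1 //=; move: cardS; rewrite (cardsD1 (corner_tile x k o) S) cS.
move: S'D; rewrite inE => /andP[tS' /eqP <-].
by rewrite tiles_region_setU1 // cardsU1 corner_tile_notin // setU11 add1n eqxx.
Qed.

End Placement.

Definition corner_count t x k o N : nat :=
  if fits t x o && (orient_h o <= k) then nregion (place t x o) k N else 0.

Lemma nregion_corner t k x N : size t = m -> x < m -> 0 < k -> k <= n ->
  nth 0 t x = 0 -> (forall i, x < i < m -> 0 < nth 0 t i) ->
  nregion t k N.+1 = corner_count t x k false N + corner_count t x k true N.
Proof.
move=> size_t x_lt_m k_gt0 k_le_n tx0 above.
pose A o := [set S | [&& tiles_region t k S, #|S| == N.+1,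
                         fits t x o && (orient_h o <= k) & corner_tile x k o \in S]].
have cardA o : #|A o| = corner_count t x k o N.
  rewrite /corner_count; case: ifP => [/andP[fit h_le_k] | nofit].
    by rewrite -card_tilings_with_corner //; apply: eq_card => S; rewrite !inE fit h_le_k.
  by apply: eq_card0 => S; rewrite inE nofit !andbF.
have disjA : [disjoint A false & A true].
  apply/pred0P => S /=; rewrite !inE; apply/negP.
  case/andP=> /and4P[tS _ /andP[f0 h0] c0] /and4P[_ _ /andP[f1 h1] c1].
  have [_ _ w0 _] := corner_tileE x_lt_m (fits_w f0) h0 k_le_n.
  have [_ _ w1 _] := corner_tileE x_lt_m (fits_w f1) h1 k_le_n.
  have := tiles_region_cover_uniq tS c0 c1
    (corner_tile_covers_corner x_lt_m (fits_w f0) h0 k_le_n)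
    (corner_tile_covers_corner x_lt_m (fits_w f1) h1 k_le_n).
  by move/(congr1 (@tw m n)); rewrite w0 w1 => /= ba; move: a_neq_b; rewrite ba eqxx.
rewrite -!cardA -cardsUI (disjoint_setI0 disjA) cards0 addn0.
apply: eq_card => S; rewrite !inE.
apply/idP/idP => [/andP[tS cardS] | /orP[] /and4P[-> -> _ _] //].
have : 0 < ncover S x k.-1.
  by rewrite (tiles_region_ncover tS) // /in_region ?tx0; lia.
case/card_gt0P => u; rewrite inE => /andP[uS cov].
have [o [fit h_le_k cu]] := corner_cover tS uS cov k_gt0 above.
by case: o fit h_le_k cu => fit h_le_k cu; rewrite tS cardS fit h_le_k -cu uS ?orbT.
Qed.

Lemma tiles_region_shift t k S : size t = m -> all (fun v => 0 < v) t ->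
  tiles_region t k.+1 S = tiles_region (map predn t) k S.
Proof.
move=> size_t tpos; congr (_ && _); apply: eq_forallb => i; apply: eq_forallb => j.
have ti : 0 < nth 0 t i by apply: (allP tpos); rewrite mem_nth ?size_t.
by rewrite /in_region (nth_map 0) ?size_t // -{1}(prednK ti) addnS ltnS.
Qed.

Lemma nregion_shift t k N : size t = m -> all (fun v => 0 < v) t ->
  nregion t k.+1 N = nregion (map predn t) k N.
Proof. by move=> size_t tpos; apply: eq_card => S; rewrite !inE tiles_region_shift. Qed.

Lemma tiles_region0 t S : tiles_region t 0 S = (S == set0).
Proof.
apply/idP/eqP => [tS | ->]; last first.
  apply/andP; split; first by apply/forall_inP => u; rewrite inE.
  by apply/forallP => i; apply/forallP => j; rewrite ncoverE big_set0.
apply/setP => u; rewrite inE; apply/negP => uS.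
have [o [w h _ _]] := good_tile_orient (tiles_region_good tS uS).
have cov : covers u (tx u) (ty u).
  by rewrite /covers w h; have := orient_w_gt0 o; have := orient_h_gt0 o; lia.
by have := tiles_region_covered tS uS cov; rewrite /in_region ltn0.
Qed.

Lemma nregion0 t N : nregion t 0 N = (N == 0).
Proof.
rewrite /nregion (_ : [set S | _] = if N == 0 then [set set0] else set0).
  by case: (N == 0); rewrite ?cards1 ?cards0.
apply/setP => S; rewrite !inE tiles_region0; case: N => [|N].
  by rewrite inE cards_eq0 andbb.
by rewrite inE; case: eqP => // ->; rewrite cards0.
Qed.

Lemma nregion_nonempty t k i j : i < m -> j < n -> in_region t k i j -> nregion t k 0 = 0.
Proof.
move=> im jn ij; apply: eq_card0 => S; rewrite inE; apply/negP => /andP[tS /eqP/cards0_eq S0].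
by have := tiles_region_ncover tS im jn; rewrite ij ncoverE S0 big_set0.
Qed.

Lemma ntilings_nregion N : ntilings m n a b N = nregion (nseq m 0) n N.
Proof.
apply: eq_card => S; rewrite !inE; congr (_ && _ && _).
apply: eq_forallb => i; apply: eq_forallb => j.
by rewrite /in_region nth_nseq if_same addn0 ltn_ord.
Qed.

End StaircaseTilings.

Section RationalSeries.

Local Open Scope ring_scope.

(* [invQ9 k] is the coefficient of [w^k] in [1 / Q9(w)], where
   [Q9(w) = 1 - 2 w^2 + w^4 - 4 w^6 + 2 w^8]; the nested matches only
   encode that coefficients of negative index vanish. *)
Fixpoint invQ9 (k : nat) : int :=
  match k with
  | 0 => 1
  | 1 => 0
  | k1.+2 => 2 * invQ9 k1 + match k1 with
    | k2.+2 => - invQ9 k2 + match k2 with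
      | k3.+2 => 4 * invQ9 k3 + match k3 with
        | k4.+2 => - (2 * invQ9 k4)
        | _ => 0 end
      | _ => 0 end
    | _ => 0 end
  end.

Lemma invQ9_rec k :
  invQ9 k.+4.+4 = 2 * invQ9 k.+4.+2 - invQ9 k.+4 + 4 * invQ9 k.+2 - 2 * invQ9 k.
Proof. by rewrite /= !addrA. Qed.

Arguments invQ9 : simpl never.

(* [ratcoef c k] is the coefficient of [w^k] in [c(w) / Q9(w)], for the
   polynomial [c] given by its list of coefficients. *)
Fixpoint ratcoef (c : seq int) (k : nat) : int :=
  if c is c0 :: c' then c0 * invQ9 k + (if k is k'.+1 then ratcoef c' k' else 0)
  else 0.

Fixpoint addc (p q : seq int) : seq int :=
  match p, q with
  | [::], _ => q
  | _, [::] => p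
  | x :: p', y :: q' => (x + y) :: addc p' q'
  end.

Definition eqcoef (p q : seq int) : bool :=
  all (fun i => p`_i == q`_i) (iota 0 (maxn (size p) (size q))).

Definition Q9 : seq int := [:: 1; 0; -2; 0; 1; 0; -4; 0; 2].
Definition P9 : seq int := [:: 1; 0; -1].

Lemma ratcoefD p q k : ratcoef (addc p q) k = ratcoef p k + ratcoef q k.
Proof.
elim: p q k => [|x p IH] [|y q] k /=; rewrite ?add0r ?addr0 //.
by case: k => [|k]; rewrite ?IH mulrDl; ring.
Qed.

Lemma ratcoef_cons0 c k : ratcoef (0 :: c) k.+1 = ratcoef c k.
Proof. by rewrite /= mul0r add0r. Qed.

Lemma eq_ratcoef p q k : (forall i, p`_i = q`_i) -> ratcoef p k = ratcoef q k.
Proof.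
have ratcoef0 c j : (forall i, c`_i = 0) -> ratcoef c j = 0.
  elim: c j => [|x c IH] j //= c0; rewrite (c0 0%N : x = 0) mul0r add0r.
  by case: j => // j; apply: IH => i; apply: (c0 i.+1).
elim: p q k => [|x p IH] [|y q] k pq //.
- by rewrite (ratcoef0 (y :: q)) // => i; rewrite -pq nth_nil.
- by rewrite (ratcoef0 (x :: p)) // => i; rewrite pq nth_nil.
rewrite /= (pq 0%N : x = y); case: k => [|k] //; congr (_ + _).
by apply: IH => i; apply: (pq i.+1).
Qed.

Lemma eqcoefP p q : eqcoef p q -> forall i, p`_i = q`_i.
Proof.
move=> /allP pq i; case: (ltnP i (maxn (size p) (size q))) => [ilt | ].
  by apply/eqP/pq; rewrite mem_iota.
by rewrite geq_max => /andP[ip iq]; rewrite !nth_default.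
Qed.

Lemma ratcoef_Q9 k : ratcoef Q9 k.+1 = 0.
Proof.
do 7 (case: k => [|k]; first by vm_compute).
by rewrite /= invQ9_rec; case: k => [|k]; ring.
Qed.

Lemma ratcoef_rec c k : (size c <= k.+1)%N ->
  ratcoef c k.+4.+4 =
    2 * ratcoef c k.+4.+2 - ratcoef c k.+4 + 4 * ratcoef c k.+2 - 2 * ratcoef c k.
Proof.
elim: c k => [|x c IH] k /= sz_c; first ring.
rewrite invQ9_rec; case: k sz_c => [|k] sz_c.
  by case: c {IH} sz_c => // _; ring.
by rewrite (IH k) //; ring.
Qed.

End RationalSeries.

Definition flat : seq nat := nseq 9 0.

Definition gf_table : seq (seq nat * seq int) := [::
  ([:: 0; 0; 0; 0; 0; 0; 0; 0; 0], [:: 1; 0; -1]%R);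
  ([:: 0; 0; 0; 0; 0; 0; 0; 3; 3], [:: 0; 0; 0; 0; 0; 0; 3; 0; -2]%R);
  ([:: 0; 0; 0; 0; 0; 3; 3; 3; 3], [:: 0; 0; 0; 0; 0; 0; 2; 0; -1]%R);
  ([:: 0; 0; 0; 3; 3; 3; 3; 3; 3], [:: 0; 0; 0; 0; 0; 0; 1]%R);
  ([:: 0; 3; 3; 3; 3; 3; 3; 3; 3], [:: ]%R);
  ([:: 2; 2; 2; 3; 3; 3; 3; 3; 3], [:: 0; 0; 0; 0; 0; 0; 1]%R);
  ([:: 1; 1; 1; 2; 2; 2; 2; 2; 2], [:: 0; 0; 0; 0; 0; 1]%R);
  ([:: 0; 0; 0; 1; 1; 1; 1; 1; 1], [:: 0; 0; 0; 0; 1]%R);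
  ([:: 0; 3; 3; 1; 1; 1; 1; 1; 1], [:: ]%R);
  ([:: 2; 2; 2; 1; 1; 1; 1; 1; 1], [:: 0; 0; 0; 0; 1]%R);
  ([:: 1; 1; 1; 0; 0; 0; 0; 0; 0], [:: 0; 0; 0; 1]%R);
  ([:: 1; 1; 1; 0; 0; 0; 0; 3; 3], [:: 0; 0; 0; 1; 0; -1]%R);
  ([:: 1; 1; 1; 0; 0; 3; 3; 3; 3], [:: 0; 0; 0; 1; 0; -1]%R);
  ([:: 1; 1; 1; 3; 3; 3; 3; 3; 3], [:: 0; 0; 0; 1; 0; -1]%R);
  ([:: 0; 0; 0; 2; 2; 2; 2; 2; 2], [:: 0; 0; 1; 0; -1]%R);
  ([:: 0; 3; 3; 2; 2; 2; 2; 2; 2], [:: ]%R);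
  ([:: 2; 2; 2; 2; 2; 2; 2; 2; 2], [:: 0; 0; 1; 0; -1]%R);
  ([:: 1; 1; 1; 1; 1; 1; 1; 1; 1], [:: 0; 1; 0; -1]%R);
  ([:: 1; 1; 1; 0; 2; 2; 2; 3; 3], [:: ]%R);
  ([:: 1; 1; 1; 0; 0; 0; 2; 2; 2], [:: 0; 0; 0; 0; 0; 1]%R);
  ([:: 1; 1; 1; 0; 3; 3; 2; 2; 2], [:: ]%R);
  ([:: 0; 0; 2; 2; 2; 3; 3; 3; 3], [:: 0; 0; 0; 0; 0; 0; 1; 0; -1]%R);
  ([:: 3; 3; 2; 2; 2; 3; 3; 3; 3], [:: 0; 0; 0; 0; 0; 0; 1; 0; -1]%R);
  ([:: 2; 2; 1; 1; 1; 2; 2; 2; 2], [:: 0; 0; 0; 0; 0; 1; 0; -1]%R);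
  ([:: 1; 1; 0; 0; 0; 1; 1; 1; 1], [:: 0; 0; 0; 0; 1; 0; -1]%R);
  ([:: 1; 1; 0; 3; 3; 1; 1; 1; 1], [:: ]%R);
  ([:: 1; 1; 2; 2; 2; 1; 1; 1; 1], [:: 0; 0; 0; 0; 1; 0; -1]%R);
  ([:: 0; 0; 1; 1; 1; 0; 0; 0; 0], [:: 0; 0; 0; 1; 0; -1]%R);
  ([:: 0; 0; 1; 1; 1; 0; 0; 3; 3], [:: 0; 0; 0; 1; 0; -1]%R);
  ([:: 0; 0; 1; 1; 1; 3; 3; 3; 3], [:: 0; 0; 0; 1; 0; -1]%R);
  ([:: 3; 3; 1; 1; 1; 3; 3; 3; 3], [:: 0; 0; 0; 1; 0; -1]%R);
  ([:: 2; 2; 0; 0; 0; 2; 2; 2; 2], [:: 0; 0; 1; 0; -1]%R);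
  ([:: 2; 2; 0; 3; 3; 2; 2; 2; 2], [:: ]%R);
  ([:: 0; 0; 1; 1; 1; 0; 2; 2; 2], [:: ]%R);
  ([:: 0; 0; 0; 0; 2; 2; 2; 3; 3], [:: 0; 0; 0; 0; 0; 0; 1; 0; -1]%R);
  ([:: 0; 0; 3; 3; 2; 2; 2; 3; 3], [:: 0; 0; 0; 0; 0; 0; 1; 0; -1]%R);
  ([:: 3; 3; 3; 3; 2; 2; 2; 3; 3], [:: 0; 0; 0; 0; 0; 0; 1; 0; -1]%R);
  ([:: 2; 2; 2; 2; 1; 1; 1; 2; 2], [:: 0; 0; 0; 0; 0; 1; 0; -1]%R);
  ([:: 1; 1; 1; 1; 0; 0; 0; 1; 1], [:: 0; 0; 0; 0; 1; 0; -1]%R);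
  ([:: 1; 1; 1; 1; 0; 3; 3; 1; 1], [:: ]%R);
  ([:: 1; 1; 1; 1; 2; 2; 2; 1; 1], [:: 0; 0; 0; 0; 1; 0; -1]%R);
  ([:: 0; 0; 0; 0; 1; 1; 1; 0; 0], [:: 0; 0; 0; 1; 0; -1]%R);
  ([:: 0; 0; 0; 0; 1; 1; 1; 3; 3], [:: 0; 0; 0; 1; 0; -1]%R);
  ([:: 0; 0; 3; 3; 1; 1; 1; 3; 3], [:: 0; 0; 0; 1; 0; -1]%R);
  ([:: 3; 3; 3; 3; 1; 1; 1; 3; 3], [:: 0; 0; 0; 1; 0; -1]%R);
  ([:: 2; 2; 2; 2; 0; 0; 0; 2; 2], [:: 0; 0; 1; 0; -1]%R);
  ([:: 2; 2; 2; 2; 0; 3; 3; 2; 2], [:: ]%R);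
  ([:: 0; 2; 2; 2; 1; 1; 1; 3; 3], [:: ]%R);
  ([:: 0; 2; 2; 2; 2; 2; 2; 3; 3], [:: ]%R);
  ([:: 0; 0; 0; 0; 0; 0; 2; 2; 2], [:: 0; 0; 1; 0; -1; 0; 1]%R);
  ([:: 0; 0; 0; 0; 3; 3; 2; 2; 2], [:: 0; 0; 0; 0; 0; 0; 1]%R);
  ([:: 0; 0; 3; 3; 3; 3; 2; 2; 2], [:: 0; 0; 0; 0; 0; 0; 1]%R);
  ([:: 3; 3; 3; 3; 3; 3; 2; 2; 2], [:: 0; 0; 0; 0; 0; 0; 1]%R);
  ([:: 2; 2; 2; 2; 2; 2; 1; 1; 1], [:: 0; 0; 0; 0; 0; 1]%R);
  ([:: 1; 1; 1; 1; 1; 1; 0; 0; 0], [:: 0; 0; 0; 0; 1]%R);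
  ([:: 1; 1; 1; 1; 1; 1; 0; 3; 3], [:: ]%R);
  ([:: 1; 1; 1; 1; 1; 1; 2; 2; 2], [:: 0; 0; 0; 0; 1]%R);
  ([:: 0; 0; 0; 0; 0; 0; 1; 1; 1], [:: 0; 0; 0; 1]%R);
  ([:: 0; 0; 0; 0; 3; 3; 1; 1; 1], [:: 0; 0; 0; 1; 0; -1]%R);
  ([:: 0; 0; 3; 3; 3; 3; 1; 1; 1], [:: 0; 0; 0; 1; 0; -1]%R);
  ([:: 3; 3; 3; 3; 3; 3; 1; 1; 1], [:: 0; 0; 0; 1; 0; -1]%R);
  ([:: 2; 2; 2; 2; 2; 2; 0; 0; 0], [:: 0; 0; 1; 0; -1]%R);
  ([:: 2; 2; 2; 2; 2; 2; 0; 3; 3], [:: ]%R);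
  ([:: 0; 2; 2; 2; 3; 3; 1; 1; 1], [:: ]%R);
  ([:: 0; 0; 0; 2; 2; 2; 1; 1; 1], [:: 0; 0; 0; 0; 0; 1]%R);
  ([:: 0; 3; 3; 2; 2; 2; 1; 1; 1], [:: ]%R);
  ([:: 0; 2; 2; 2; 3; 3; 2; 2; 2], [:: ]%R)
].

Definition states : seq (seq nat) := map fst gf_table.

Definition cert (t : seq nat) : seq int := nth [::] (map snd gf_table) (index t states).

Definition last_zero (t : seq nat) : nat :=
  foldl (fun x i => if nth 0 t i == 0 then i else x) 0 (iota 0 (size t)).

Definition corner_cert (t : seq nat) (x : nat) (o : bool) : seq int :=
  if fits 2 3 t x o then cert (place 2 3 t x o) else [::].

Definition shift_ok (t : seq nat) : bool :=
  [&& map predn t \in states, sumn t == sumn (map predn t) + 9 &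
      eqcoef (cert t) (0%R :: cert (map predn t))].

(* Below the height [h] of the tile the recurrence has no placement term, so
   there the series of the placed profile must vanish. *)
Definition place_ok (t : seq nat) (x : nat) (o : bool) : bool :=
  let p := place 2 3 t x o in
  fits 2 3 t x o ==>
  [&& p \in states, sumn p == sumn t + 6 &
      all (fun j => ratcoef (cert p) j == 0%R) (iota 1 (orient_h 2 3 o).-1)].

(* For [flat] the empty tiling at [k = 0] contributes [1 = Q9 / Q9]. *)
Definition corner_ok (t : seq nat) : bool :=
  let x := last_zero t in
  [&& x < 9, nth 0 t x == 0, all (fun i => 0 < nth 0 t i) (iota x.+1 (8 - x)),
      eqcoef (cert t) (addc (if t == flat then Q9 else [::])
                            (addc (corner_cert t x false) (corner_cert t x true))),
      place_ok t x false & place_ok t x true].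

Definition cert_ok (t : seq nat) : bool :=
  (size t == 9) && if all (fun v => 0 < v) t then shift_ok t else corner_ok t.

Lemma cert_ok_states : all cert_ok states.
Proof. by vm_compute. Qed.

Lemma flat_state : flat \in states.
Proof. by vm_compute. Qed.

Lemma cert_flat : cert flat = P9.
Proof. by vm_compute. Qed.

(* Unfolding the table during unification is prohibitively slow. *)
Opaque cert.

Lemma states_cert_ok t : t \in states -> cert_ok t.
Proof. exact: (allP cert_ok_states). Qed.

Lemma states_size t : t \in states -> size t = 9.
Proof. by case/states_cert_ok/andP => /eqP. Qed.

Lemma states_shift t : t \in states -> all (fun v => 0 < v) t -> shift_ok t.
Proof. by case/states_cert_ok/andP => _ + tpos; rewrite tpos. Qed.

Lemma states_corner t : t \in states -> ~~ all (fun v => 0 < v) t -> corner_ok t.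
Proof. by case/states_cert_ok/andP => _ + tneg; rewrite (negbTE tneg). Qed.

Section Certified.

Variable n : nat.

(* [9 k - sumn t] is the area of the region. *)
Definition cert_spec (t : seq nat) (k : nat) : Prop :=
  forall N, Posz (nregion 2 3 9 n t k N) =
            if 6 * N == 9 * k - sumn t then ratcoef (cert t) k else 0%R.

Lemma cert_spec_flat : cert_spec flat 0.
Proof. by move=> N; rewrite nregion0 // muln0 sub0n muln_eq0 cert_flat; case: (N == 0). Qed.

Lemma cert_spec_shift t k : t \in states -> all (fun v => 0 < v) t ->
  cert_spec (map predn t) k -> cert_spec t k.+1.
Proof.
move=> tS tpos spec_p N; have /and3P[_ /eqP sum_t c_t] := states_shift tS tpos.
rewrite nregion_shift ?states_size // spec_p sum_t mulnSr subnDr.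
by rewrite (eq_ratcoef _ (eqcoefP c_t)) ratcoef_cons0.
Qed.

Section CornerCase.

Variables (t : seq nat) (k : nat).
Hypotheses (tS : t \in states) (tneg : ~~ all (fun v => 0 < v) t)
           (k_lt_n : k < n) (t_le : forall i, nth 0 t i <= k.+1).

Let x := last_zero t.

Lemma corner_count_spec o N :
  (fits 2 3 t x o -> orient_h 2 3 o <= k.+1 -> cert_spec (place 2 3 t x o) k.+1) ->
  Posz (corner_count 2 3 9 n t x k.+1 o N) =
  if 6 * N.+1 == 9 * k.+1 - sumn t then ratcoef (corner_cert t x o) k.+1 else 0%R.
Proof.
move=> spec_p; rewrite /corner_count /corner_cert.
case fit: (fits 2 3 t x o) => /=; last by case: ifP.
have := states_corner tS tneg; rewrite /corner_ok -/x => /and5P[_ _ _ _ /andP[ok0 ok1]].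
have : place_ok t x o by case: (o) ok0 ok1.
rewrite /place_ok fit => /and3P[pS /eqP sum_p vanish].
case: (leqP (orient_h 2 3 o) k.+1) => h_le /=.
  have sum_le : sumn (place 2 3 t x o) <= 9 * k.+1.
    by rewrite -(states_size pS); apply/sumn_le_mul/place_le.
  rewrite spec_p //; congr (if _ then _ else _); apply/eqP/eqP; lia.
have vanish_k : ratcoef (cert (place 2 3 t x o)) k.+1 = 0%R.
  by apply/eqP/(allP vanish); rewrite mem_iota; lia.
by rewrite vanish_k; case: ifP.
Qed.

Lemma cert_spec_corner :
  (forall o, fits 2 3 t x o -> orient_h 2 3 o <= k.+1 -> cert_spec (place 2 3 t x o) k.+1) ->
  cert_spec t k.+1.
Proof.
move=> spec_p N; have size_t := states_size tS.
have /and5P[x_lt /eqP tx0 above c_t _] := states_corner tS tneg.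
have above' i : x < i < 9 -> 0 < nth 0 t i.
  by move=> ri; apply: (allP above); rewrite mem_iota; lia.
case: N => [|N].
  have sum_lt : sumn t < 9 * k.+1 by rewrite -size_t (sumn_lt_mul (x := x)) ?size_t ?tx0.
  rewrite (nregion_nonempty _ _ x_lt k_lt_n) /in_region ?tx0 ?addn0 // ifN //; apply/eqP; lia.
rewrite (eq_ratcoef _ (eqcoefP c_t)) !ratcoefD.
rewrite (@nregion_corner 2 3 9 n isT isT isT t k.+1 x N) ?size_t // PoszD.
rewrite (corner_count_spec _ (spec_p false)) (corner_count_spec _ (spec_p true)).
case: (t == flat); rewrite ?ratcoef_Q9 add0r;
  by case: (6 * N.+1 == 9 * k.+1 - sumn t); rewrite // addr0.
Qed.

End CornerCase.

Lemma cert_spec_states k t : t \in states -> k <= n -> (forall i, nth 0 t i <= k) ->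
  cert_spec t k.
Proof.
(* [10 k - sumn t] decreases along both recurrences, as [sumn t <= 9 k]. *)
have [mu] := ubnP (10 * k - sumn t); elim: mu k t => // mu IH k t mu_gt tS k_le t_le.
have size_t := states_size tS.
have sum_le : sumn t <= 9 * k by rewrite -size_t sumn_le_mul.
case: k k_le t_le mu_gt sum_le => [|k] k_le t_le mu_gt sum_le.
  suff -> : t = flat by apply: cert_spec_flat.
  apply: (@eq_from_nth _ 0) => [|i _]; first by rewrite size_t.
  by rewrite nth_nseq if_same; have := t_le i; lia.
have [tpos | tneg] := boolP (all (fun v => 0 < v) t).
  have /and3P[pS /eqP sum_t _] := states_shift tS tpos.
  apply: cert_spec_shift => //; apply: IH => //; [lia | lia | move=> i].
  case: (ltnP i (size t)) => it; last by rewrite nth_default ?size_map.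
  by rewrite (nth_map 0) //; have := t_le i; lia.
apply: cert_spec_corner => // o fit h_le.
have := states_corner tS tneg; rewrite /corner_ok => /and5P[_ _ _ _ /andP[ok0 ok1]].
have : place_ok t (last_zero t) o by case: (o) ok0 ok1.
rewrite /place_ok fit => /and3P[pS /eqP sum_p _].
by apply: IH; rewrite ?sum_p //; [lia | apply: place_le].
Qed.

End Certified.

Local Open Scope ring_scope.

Definition T3 (M : nat) : int := ratcoef P9 (2 * M).

Lemma T23_9E N : (T23_9 N)%:R = if (3 %| N)%N then T3 (N %/ 3) else 0.
Proof.
rewrite natz /T23_9 (_ : (3 %| 2 * N) = (3 %| N))%N; last by apply/idP/idP; lia.
case: ifP => // /dvdnP[M ->]; rewrite mulnK // mulnA mulnK //.
rewrite ntilings_nregion // (@cert_spec_states _ (2 * M) flat) ?flat_state //.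
  by rewrite /= subn0 (_ : 6 * (M * 3) = 9 * (2 * M))%N ?eqxx ?cert_flat //; lia.
by move=> i; rewrite nth_nseq if_same.
Qed.

Lemma T3_rec M :
  T3 M.+4.+1 - 2 * T3 M.+4 + T3 M.+3 - 4 * T3 M.+2 + 2 * T3 M.+1 = 0.
Proof.
rewrite /T3; set k := (2 * M).+2.
have -> : (2 * M.+4.+1 = k.+4.+4)%N by rewrite /k; lia.
have -> : (2 * M.+4 = k.+4.+2)%N by rewrite /k; lia.
have -> : (2 * M.+3 = k.+4)%N by rewrite /k; lia.
have -> : (2 * M.+2 = k.+2)%N by rewrite /k; lia.
have -> : (2 * M.+1 = k)%N by rewrite /k; lia.
by rewrite ratcoef_rec //; ring.
Qed.

Definition lag (f : nat -> int) (N c : nat) : int := if (c <= N)%N then f (N - c)%N else 0.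

Lemma sum_coefXn (f : nat -> int) N c :
  \sum_(k < N.+1) ('X^c : {poly int})`_k * f (N - k)%N = lag f N c.
Proof.
rewrite /lag; case: leqP => [cN | Nc].
  rewrite (bigD1 (Ordinal (cN : (c < N.+1)%N))) //= coefXn eqxx mul1r big1 ?addr0 //.
  move=> k kc; rewrite coefXn (_ : (k == c :> nat) = false) ?mul0r //.
  by apply: contraNF kc => /eqP kc; apply/eqP/val_inj.
rewrite big1 // => k _; rewrite coefXn (_ : (k == c :> nat) = false) ?mul0r //.
by apply/eqP => kc; have := ltn_ord k; rewrite kc; lia.
Qed.

Lemma sum_coefQ (f : nat -> int) N :
  \sum_(k < N.+1) (1 - 2%:P * 'X^3 + 'X^6 - 4%:P * 'X^9 + 2%:P * 'X^12 : {poly int})`_k * f (N - k)%N =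
  lag f N 0 - 2 * lag f N 3 + lag f N 6 - 4 * lag f N 9 + 2 * lag f N 12.
Proof.
rewrite -!sum_coefXn !mulr_sumr -sumrB -big_split -sumrB -big_split /=.
by apply: eq_bigr => k _; rewrite !coefD !coefN !coefCM coef1 !coefXn; ring.
Qed.

Lemma lag_T23_9_ndvd N c : ~~ (3 %| N)%N -> (3 %| c)%N -> lag (fun j => (T23_9 j)%:R) N c = 0.
Proof.
move=> N3 c3; rewrite /lag; case: leqP => // cN; rewrite T23_9E ifN //.
by apply: contra N3 => h; lia.
Qed.

Lemma lag_T23_9_mul3 M c : (3 %| c)%N ->
  lag (fun j => (T23_9 j)%:R) (M * 3) c = lag T3 M (c %/ 3).
Proof.
move=> /dvdnP[d ->]; rewrite /lag mulnK // leq_pmul2r //.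
by case: leqP => // dM; rewrite T23_9E -mulnBl dvdn_mull // mulnK.
Qed.

Lemma T3_conv M :
  lag T3 M 0 - 2 * lag T3 M 1 + lag T3 M 2 - 4 * lag T3 M 3 + 2 * lag T3 M 4 =
  (M == 0)%:R - (M == 1)%:R.
Proof.
case: M => [|[|[|[|[|M]]]]]; last by rewrite /lag /= !subSS !subn0 T3_rec.
all: by vm_compute.
Qed.

Theorem mainTheorem12 :
  let P : {poly int} := 1 - 'X^3 in
  let Q : {poly int} := 1 - 2%:P * 'X^3 + 'X^6 - 4%:P * 'X^9 + 2%:P * 'X^12 in
  forall N : nat,
    \sum_(k < N.+1) Q`_k * (T23_9 (N - k))%:R = P`_N.
Proof.
move=> P Q N; rewrite /P coefB coef1 coefXn.
rewrite (sum_coefQ (fun j => (T23_9 j)%:R)).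
have [/dvdnP[M ->] | N3] := boolP (3 %| N)%N.
  rewrite !lag_T23_9_mul3 // muln_eq0 orbF (_ : (M * 3 == 3)%N = (M == 1)%N).
    exact: T3_conv.
  by apply/eqP/eqP; lia.
have [N_neq0 N_neq3] : (N != 0)%N /\ (N != 3)%N by split; apply: contraNneq N3 => ->.
rewrite !lag_T23_9_ndvd // (negbTE N_neq0) (negbTE N_neq3).
by rewrite !mulr0 !subr0 ?addr0.
Qed.
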